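(* Let $G$ be an étale locally compact Hausdorff groupoid and let $\Sigma \rightarrow G$ be a twist. If $f \in \ell^2(\Sigma; G)$ and $\operatorname{supp}(f) \subseteq U$ for some open $U \subseteq G$, then $f$ lies in the closure of $C_c(\Sigma|_U;U)$ with respect to $\|\cdot\|_{2}$.
   Context: A twist $\Sigma\rightarrow G$ is a locally trivial central extension $\mathbb{T}\times G^{(0)} \to \Sigma \to G$; it determines a complex line bundle $L$ over $G$ (the quotient of $\mathbb{C}\times\Sigma$ by $(z,\sigma)\sim(\overline{\lambda}z,\lambda\cdot\sigma)$, $\lambda\in\mathbb{T}$) with a well-defined absolute value $|[z,\sigma]|=|z|$. $C_c(\Sigma;G)$ is the space of continuous compactly supported sections $G\to L$, and for $U\subseteq G$, $C_c(\Sigma|_U;U)$ denotes the sections in $C_c(\Sigma;G)$ whose support is contained in $U$. For $x\in G^{(0)}$, $G_x=s^{-1}(x)$, $G^x=r^{-1}(x)$. The $2$-norm is $\|f\|_2=\sup_{x\in G^{(0)}}\max\{\sum_{\gamma\in G_x}|f(\gamma)|^2,\sum_{\gamma\in G^x}|f(\gamma)|^2\}^{1/2}$, and $\ell^2(\Sigma;G)$ is the completion of $C_c(\Sigma;G)$ in this norm, viewed as a space of continuous sections of $L$. For a section $f$, $\operatorname{supp}(f)=\{\gamma\in G: f(\gamma)\neq 0\}$ (an open set). *)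

From HB Require Import structures.
From mathcomp Require Import all_boot all_order all_algebra.
From mathcomp Require Import all_classical all_reals all_analysis.
From mathcomp Require Export complex.
Export numFieldNormedType.Exports.

Set Implicit Arguments.
Unset Strict Implicit.
Unset Printing Implicit Defensive.

Import Order.TTheory GRing.Theory Num.Theory.
Local Open Scope classical_set_scope.
Local Open Scope ring_scope.

(* The structure of a groupoid on a type G: unit space G^(0), source,  *)
(* range, a (total function extending the) partial multiplication,     *)
(* only meaningful on composable pairs (s g = r h), and inversion.      *)
Record groupoid_ops (G : Type) := GroupoidOps {
  g0   : set G;
  gsrc : G -> G;
  grng : G -> G;
  gmul : G -> G -> G;
  ginv : G -> G
}.

Definition composable {G : Type} (O : groupoid_ops G) : set (G * G) :=
  [set p | gsrc O p.1 = grng O p.2].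

Definition is_groupoid {G : Type} (O : groupoid_ops G) : Prop :=
  [/\ (forall g, g0 O (gsrc O g) /\ g0 O (grng O g)) /\
      (forall u, g0 O u -> gsrc O u = u /\ grng O u = u),
      (forall g h, gsrc O g = grng O h ->
         gsrc O (gmul O g h) = gsrc O h /\ grng O (gmul O g h) = grng O g),
      (forall g h k, gsrc O g = grng O h -> gsrc O h = grng O k ->
         gmul O (gmul O g h) k = gmul O g (gmul O h k)),
      (forall g, gmul O (grng O g) g = g /\ gmul O g (gsrc O g) = g) &
      (forall g, [/\ gsrc O (ginv O g) = grng O g, grng O (ginv O g) = gsrc O g,
                     gmul O g (ginv O g) = grng O g & gmul O (ginv O g) g = gsrc O g])].

Definition is_topological_groupoid {G : topologicalType} (O : groupoid_ops G)
  : Prop :=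
  [/\ is_groupoid O, continuous (gsrc O), continuous (grng O),
      continuous (ginv O) &
      {within composable O, continuous (fun p : G * G => gmul O p.1 p.2)}].

Definition homeo_onto {X Y : topologicalType} (A : set X) (B : set Y)
  (f : X -> Y) : Prop :=
  (forall x, A x -> B (f x)) /\
  exists g : Y -> X,
    [/\ (forall y, B y -> A (g y)), (forall x, A x -> g (f x) = x),
        (forall y, B y -> f (g y) = y),
        {within A, continuous f} & {within B, continuous g}].

Definition local_homeo {X Y : topologicalType} (f : X -> Y) : Prop :=
  forall x, exists U : set X,
    [/\ open U, U x, open (f @` U) & homeo_onto U (f @` U) f].

Definition is_etale {G : topologicalType} (O : groupoid_ops G) : Prop :=
  local_homeo (grng O).

Definition lc_hausdorff (G : topologicalType) : Prop :=
  hausdorff_space G /\ locally_compact [set: G].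

(* Twists.  Complex numbers are R[i] (R : realType) with the norm      *)
(* topology ( R[i]^o ); the circle group is T.                         *)
Notation CC R := (R[i])^o.

Definition circle {R : realType} : set (CC R) := [set z | `|z : R[i]| = 1].

Section Twist.
Variables (R : realType) (G S : topologicalType).
Variables (OG : groupoid_ops G) (OS : groupoid_ops S).
Variables (pi : S -> G) (iota : CC R -> G -> S).

(* A twist T x G^(0) --iota--> S --pi--> G : a locally trivial central
   extension of topological groupoids. *)
Definition is_twist : Prop :=
  [/\ is_topological_groupoid OS,
      [/\ continuous pi, (forall A : set S, open A -> open (pi @` A)),
          (forall g, exists s, pi s = g),
          (forall a b, gsrc OS a = grng OS b ->
              pi (gmul OS a b) = gmul OG (pi a) (pi b)) &
          (forall a, [/\ pi (gsrc OS a) = gsrc OG (pi a),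
                        pi (grng OS a) = grng OG (pi a),
                        pi (ginv OS a) = ginv OG (pi a) &
                        (g0 OS a -> g0 OG (pi a))])],
      (* iota : continuous injective groupoid homomorphism from the trivial
         group bundle T x G^(0), with pi (iota z u) = u *)
      [/\ {within [set p : CC R * G | circle p.1 /\ g0 OG p.2],
             continuous (fun p => iota p.1 p.2)},
          (forall z u, circle z -> g0 OG u ->
             [/\ pi (iota z u) = u, pi (gsrc OS (iota z u)) = u &
                 pi (grng OS (iota z u)) = u]),
          (forall z w u, circle z -> circle w -> g0 OG u ->
             iota (z * w) u = gmul OS (iota z u) (iota w u)) &
          (forall z w u v, circle z -> circle w -> g0 OG u -> g0 OG v ->
             iota z u = iota w v -> z = w /\ u = v)],
      (forall s, g0 OG (pi s) <-> (exists z, circle z /\ iota z (pi s) = s)) /\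
      (forall z s, circle z ->
         gmul OS (iota z (pi (grng OS s))) s = gmul OS s (iota z (pi (gsrc OS s)))) &
      (forall g, exists (U : set G) (sec : G -> S),
         [/\ open U, U g, {within U, continuous sec},
             (forall h, U h -> pi (sec h) = h) &
             homeo_onto [set p : CC R * G | circle p.1 /\ U p.2] (pi @^-1` U)
               (fun p => gmul OS (iota p.1 (grng OG p.2)) (sec p.2))])].

Definition tact (z : CC R) (s : S) : S := gmul OS (iota z (pi (grng OS s))) s.

(* Sections of the line bundle L = (C x S)/~ , (w,s) ~ (conj z w, z.s). *)
(* A section gamma |-> [F s, s] (pi s = gamma) is encoded by the        *)
(* function F : S -> C, which must satisfy F (z.s) = conj z * F s.      *)
Definition is_section (F : S -> CC R) : Prop :=
  forall z s, circle z -> F (tact z s) = conjc z * F s.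

(* |f(gamma)| = |F s| for any s over gamma (well defined for sections) *)
Definition absL (F : S -> CC R) (g : G) : R :=
  sup [set complex.Re `|F s : R[i]| | s in pi @^-1` [set g]].

Definition suppL (F : S -> CC R) : set G := [set g | absL F g != 0].

Definition in_Cc (F : S -> CC R) : Prop :=
  [/\ continuous F, is_section F & compact (closure (suppL F))].

Definition in_CcU (U : set G) (F : S -> CC R) : Prop :=
  in_Cc F /\ suppL F `<=` U.

Definition sqrte (x : \bar R) : \bar R :=
  match x with
  | EFin r => EFin (Num.sqrt r)
  | EPInf => @EPInf R
  | ENInf => EFin 0
  end.

Definition norm2 (F : S -> CC R) : \bar R :=
  ereal_sup [set sqrte (Order.max
      (\esum_(g in [set g | gsrc OG g = x]) ((absL F g) ^+ 2)%:E)
      (\esum_(g in [set g | grng OG g = x]) ((absL F g) ^+ 2)%:E))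
    | x in g0 OG].

Definition in_norm2_closure (P : (S -> CC R) -> Prop) (F : S -> CC R) : Prop :=
  forall e : R, 0 < e -> exists2 H, P H & (norm2 (fun s => (F s - H s)%R) < e%:E)%E.

(* l^2(S;G): the completion of C_c(S;G) in ||.||_2, viewed as continuous
   sections of L *)
Definition in_l2 (F : S -> CC R) : Prop :=
  [/\ continuous F, is_section F & in_norm2_closure in_Cc F].

End Twist.

From Pilot Require Import Defs.
From HB Require Import structures.
From mathcomp Require Import all_boot all_order all_algebra.
From mathcomp Require Import all_classical all_reals all_analysis.
From mathcomp Require Import finmap complex lra.
Import numFieldNormedType.Exports.
Import Order.TTheory GRing.Theory Num.Theory.
Local Open Scope classical_set_scope.
Local Open Scope ring_scope.
Set Implicit Arguments.
Unset Strict Implicit.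

(* Approximate f in the 2-norm by some g in C_c(Sigma; G).  Since G is etale,
   every point has an open neighbourhood on which both s and r are injective,
   so the compact set closure(supp g) meets every fibre G_x, G^x in at most N
   points.  Cut f off continuously below a level d: h = f phi(|f|/d) with
   phi = 0 on [0,1] and phi = 1 on [2,oo).  Then supp h lies in supp f, hence
   in U, and in {|f| > d}, hence in the support of any g' in C_c with
   ||f - g'||_2 < d, because the 2-norm dominates the sup norm; so h is in
   C_c(Sigma|_U; U).  Finally |f - h| <= |f - g| off supp g and |f - h| <= 2d
   everywhere, so each fibre sum of |f - h|^2 is at most ||f - g||_2^2 + 4d^2 N,
   which is small once d is. *)

Section Groupoid.
Variables (T : Type) (O : groupoid_ops T).
Hypothesis HO : is_groupoid O.

Lemma ginvK : involutive (ginv O).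
Proof.
case: HO => _ _ mulA unitE invE g.
have [sg rg gVg Vgg] := invE g; have [sVg rVg VgVVg VVgVg] := invE (ginv O g).
rewrite -{1}[ginv O (ginv O g)](proj2 (unitE _)) sVg rg -Vgg.
by rewrite -mulA ?VVgVg ?sg ?(proj1 (unitE g)) // sVg.
Qed.

Lemma gsrcE : gsrc O =1 grng O \o ginv O.
Proof. by case: HO => _ _ _ _ invE g /=; have [] := invE g. Qed.

End Groupoid.

Definition locally_injective {X : topologicalType} {Y : Type} (p : X -> Y) :=
  forall x, exists2 V : set X, open_nbhs x V & set_inj V p.

Lemma local_homeo_locally_injective {X Y : topologicalType} (p : X -> Y) :
  local_homeo p -> locally_injective p.
Proof.
move=> homeo x; have [V [oV Vx _ [_ [q [_ pK _ _ _]]]]] := homeo x.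
exists V => // a b /set_mem Va /set_mem Vb pab.
by rewrite -(pK _ Va) -(pK _ Vb) pab.
Qed.

Lemma locally_injective_comp {X Y : topologicalType} {Z : Type}
    (p : Y -> Z) (q : X -> Y) :
  continuous q -> injective q -> locally_injective p -> locally_injective (p \o q).
Proof.
move=> cq iq lp x; have [V [oV Vqx] pV] := lp (q x).
exists (q @^-1` V); first by split => //; exact: open_comp.
by move=> a b /set_mem Va /set_mem Vb /(pV _ _ (mem_set Va) (mem_set Vb)) /iq.
Qed.

Lemma etale_bisection_nbhs {G : topologicalType} (O : groupoid_ops G) :
  is_topological_groupoid O -> is_etale O ->
  forall g, exists V : set G,
    [/\ open V, V g, set_inj V (gsrc O) & set_inj V (grng O)].
Proof.
move=> [HO _ _ cinv _] et g.
have lr := local_homeo_locally_injective et.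
have ls : locally_injective (gsrc O).
  rewrite (funext (gsrcE HO)).
  exact: locally_injective_comp cinv (can_inj (ginvK HO)) lr.
have [Vs [oVs Vsg] iVs] := ls g; have [Vr [oVr Vrg] iVr] := lr g.
exists (Vs `&` Vr); split; first exact: openI.
- by [].
- by move=> a b /set_mem[Va _] /set_mem[Vb _]; apply: iVs; exact: mem_set.
- by move=> a b /set_mem[_ Va] /set_mem[_ Vb]; apply: iVr; exact: mem_set.
Qed.

(* [compact_cover] is only stated for pointed spaces; any point of a nonempty
   [K] will do. *)
Definition pointed_at (T : topologicalType) (x : T) : Type := T.
HB.instance Definition _ (T : topologicalType) (x : T) :=
  Topological.copy (pointed_at x) T.
HB.instance Definition _ (T : topologicalType) (x : T) :=
  isPointed.Build (pointed_at x) x.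

Lemma compact_cover_compact (T : topologicalType) (K : set T) :
  compact K -> cover_compact K.
Proof.
have [->|/set0P[x _]] := eqVneq K set0; last first.
  by rewrite (_ : compact K = @compact (pointed_at x) K) // compact_cover.
by move=> _ I D V _ _; exists fset0.
Qed.

Definition unit_fibers {G : Type} (O : groupoid_ops G) : set (set G) :=
  [set B | exists2 x, g0 O x &
     B = [set g | gsrc O g = x] \/ B = [set g | grng O g = x]].

Lemma esum_fiber_indicator_inj_le (R : realType) (T : choiceType) (Y : Type)
    (p : T -> Y) (V : set T) (y : Y) (c : R) :
  0 <= c -> set_inj V p ->
  (\esum_(x in [set x | p x = y]) (c * \1_V x)%:E <= c%:E)%E.
Proof.
move=> c0 injV.
have [[x0 [px0 Vx0]]|] := pselect (exists x, p x = y /\ V x); last first.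
  move=> noV; rewrite esum1 // => x px; rewrite indicE memNset ?mulr0 //.
  by move=> Vx; apply: noV; exists x.
rewrite (esumID [set x0]); last by move=> x _; rewrite lee_fin mulr_ge0.
rewrite [X in (_ + X)%E]esum1 ?adde0; last first.
  move=> x [/= px nx]; rewrite indicE memNset ?mulr0 // => Vx.
  by apply: nx; apply: injV; [exact: mem_set | exact: mem_set | rewrite px px0].
rewrite (_ : _ `&` _ = [set x0]); last by apply/seteqP; split=> [x []|x ->].
by rewrite esum_set1 ?indicE ?mem_set ?mulr1 // lee_fin mulr_ge0.
Qed.

Lemma esum_fiber_indicator_le (R : realType) (T I : choiceType) (Y : Type)
    (p : T -> Y) (V : I -> set T) (D : {fset I}) (A : set T) (y : Y) (c : R) :
  0 <= c -> (forall i, i \in D -> set_inj (V i) p) ->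
  A `<=` \bigcup_(i in [set` D]) V i ->
  (\esum_(x in [set x | p x = y]) (c * \1_A x)%:E <= (c * #|` D|%:R)%:E)%E.
Proof.
move=> c0 injV AV.
apply: (@le_trans _ _ (\esum_(x in [set x | p x = y])
    \sum_(i <- D) (c * \1_(V i) x)%:E)).
  apply: le_esum => x _; have [Ax|nAx] := pselect (A x); last first.
    by rewrite indicE memNset // mulr0 sume_ge0 // => i _; rewrite lee_fin mulr_ge0.
  have [i Di Vix] := AV x Ax.
  rewrite (big_rem i) //= !indicE !mem_set // mulr1 leeDl // sume_ge0 // => j _.
  by rewrite lee_fin mulr_ge0.
rewrite esum_sum; last by move=> x i _ _; rewrite lee_fin mulr_ge0.
have -> : (c * #|` D|%:R)%:E = \sum_(i <- D) c%:E.
  by rewrite sumEFin big_const_seq count_predT iter_addr_0 mulr_natr.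
rewrite big_seq [leRHS]big_seq; apply: lee_sum => i Di.
exact: esum_fiber_indicator_inj_le (injV i Di).
Qed.

Lemma etale_fiber_indicator_bound (R : realType) (G : topologicalType)
    (O : groupoid_ops G) (A : set G) :
  is_topological_groupoid O -> is_etale O -> compact (closure A) ->
  exists N : nat, forall (B : set G) (c : R), unit_fibers O B -> 0 <= c ->
    (\esum_(g in B) (c * \1_A g)%:E <= (c * N%:R)%:E)%E.
Proof.
move=> HO et cA.
have [V bisV] := choice (etale_bisection_nbhs HO et).
have oV g : open (V g) by have [? ? ? ?] := bisV g.
have [|D _ AD] := compact_cover_compact cA (fun g (_ : closure A g) => oV g).
  by move=> g Ag; exists g => //; have [? ? ? ?] := bisV g.
have AV : A `<=` \bigcup_(g in [set` D]) V g by move=> g /subset_closure /AD.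
exists #|` D| => B c [x _ [->|->]] c0;
  by apply: (esum_fiber_indicator_le (V := V)) => // g _; have [? ? ? ?] := bisV g.
Qed.

(* [Defs.sqrte] is qualified because [sqrte] alone denotes the library's square
   root on extended reals. *)
Lemma sqrte_lt_le_sqr (R : realType) (x : \bar R) (r : R) :
  (0 <= x)%E -> (Defs.sqrte x < r%:E)%E -> (x <= (r ^+ 2)%:E)%E.
Proof.
case: x => [t||] //= t0 tr; rewrite lee_fin in t0; rewrite lte_fin in tr.
have r0 : 0 <= r by apply: le_trans (ltW tr); exact: sqrtr_ge0.
by rewrite lee_fin -(sqr_sqrtr t0) ler_sqr ?nnegrE ?sqrtr_ge0 // ltW.
Qed.

Lemma sqrte_le (R : realType) (x : \bar R) (r : R) :
  0 <= r -> (x <= (r ^+ 2)%:E)%E -> (Defs.sqrte x <= r%:E)%E.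
Proof.
case: x => [t||] r0 //=; rewrite ?lee_fin //.
by move=> tr; rewrite -(ger0_norm r0) -sqrtr_sqr ler_wsqrtr.
Qed.

Section Norm2.
Variables (R : realType) (G S : topologicalType) (OG : groupoid_ops G) (pi : S -> G).

Lemma norm2_lt_fiber (F : S -> CC R) (r : R) (B : set G) :
  (norm2 OG pi F < r%:E)%E -> unit_fibers OG B ->
  (\esum_(g in B) (absL pi F g ^+ 2)%:E <= (r ^+ 2)%:E)%E.
Proof.
move=> Fr [x ux eB].
have fiber_ge0 (A : set G) : (0 <= \esum_(g in A) (absL pi F g ^+ 2)%:E)%E.
  by apply: esum_ge0 => g _; rewrite lee_fin sqr_ge0.
have := sqrte_lt_le_sqr _ (le_lt_trans (ereal_sup_ubound (ex_intro2 _ _ x ux erefl)) Fr).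
by rewrite le_max fiber_ge0 ge_max => /(_ isT)/andP[]; case: eB => ->.
Qed.

Lemma norm2_le_fibers (F : S -> CC R) (r : R) :
  0 <= r ->
  (forall B, unit_fibers OG B ->
     (\esum_(g in B) (absL pi F g ^+ 2)%:E <= (r ^+ 2)%:E)%E) ->
  (norm2 OG pi F <= r%:E)%E.
Proof.
move=> r0 Fr; apply: ge_ereal_sup => _ [x ux <-].
apply: sqrte_le; rewrite // ge_max; apply/andP; split; apply: Fr.
- by exists x => //; left.
- by exists x => //; right.
Qed.

Lemma norm2_lt_absL (F : S -> CC R) (r : R) (g : G) :
  is_groupoid OG -> (norm2 OG pi F < r%:E)%E -> absL pi F g ^+ 2 <= r ^+ 2.
Proof.
case=> [[unitsg _] _ _ _ _] Fr.
rewrite -lee_fin; apply: le_trans (norm2_lt_fiber Fr _); last first.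
  by exists (gsrc OG g); [exact: (unitsg g).1 | left].
apply: esum_ge; exists [set g]; first by split; [exact: finite_set1 | move=> ? ->].
by rewrite fsbig_set1.
Qed.

End Norm2.

Definition pos_part (C : numFieldType) (y : C) : C := (y + `|y|) / 2.

(* [ramp] is 0 on (-oo, 1], 1 on [2, +oo) and affine in between.  It is written
   with [`|_|] so that it is also a continuous function on the complex numbers,
   where it is only evaluated at nonnegative reals. *)
Definition ramp (C : numFieldType) (y : C) : C := pos_part (y - 1) - pos_part (y - 2).

Lemma continuous_pos_part (C : numFieldType) : continuous (@pos_part C : C^o -> C^o).
Proof.
move=> y; apply: (@continuousM _ _ (fun y : C^o => y + `|y|) (fun=> 2^-1)).
  by apply: (@continuousD _ C^o _ id (fun y : C^o => `|y|)) => //; exact: norm_continuous.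
exact: cst_continuous.
Qed.

Lemma continuous_ramp (C : numFieldType) : continuous (@ramp C : C^o -> C^o).
Proof.
have shift (c : C) : continuous (fun y : C^o => pos_part (y - c) : C^o).
  move=> y; apply: (@continuous_comp _ _ _ (fun y : C^o => y - c)).
    by apply: (@continuousB _ C^o _ id (fun=> c)) => //; exact: cst_continuous.
  exact: continuous_pos_part.
move=> y; exact: (@continuousB _ C^o _ (fun y : C^o => pos_part (y - 1) : C^o)
  (fun y : C^o => pos_part (y - 2) : C^o) _ (shift 1 y) (shift 2 y)).
Qed.

Section RealRamp.
Variable R : realFieldType.
Implicit Types u y : R.

Lemma pos_part_id y : 0 <= y -> pos_part y = y.
Proof. by move=> y0; rewrite /pos_part ger0_norm //; lra. Qed.

Lemma pos_part_eq0 y : y <= 0 -> pos_part y = 0.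
Proof. by move=> y0; rewrite /pos_part ler0_norm //; lra. Qed.

Lemma ramp_le1_eq0 u : u <= 1 -> ramp u = 0.
Proof. by move=> u1; rewrite /ramp !pos_part_eq0 ?subr0 //; lra. Qed.

Lemma ramp_ge2 u : 2 <= u -> ramp u = 1.
Proof. by move=> u2; rewrite /ramp !pos_part_id; lra. Qed.

Lemma ramp_itv u : 0 <= ramp u <= 1.
Proof.
have [u1|u1] := leP u 1; first by rewrite ramp_le1_eq0 // lexx ler01.
have [u2|u2] := leP 2 u; first by rewrite ramp_ge2 // ler01 lexx.
by rewrite /ramp pos_part_id ?pos_part_eq0; lra.
Qed.

End RealRamp.

Lemma normc_ge0 (R : realType) (z : R[i]) : 0 <= Normc.normc z.
Proof. by case: z => a b; exact: sqrtr_ge0. Qed.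

Lemma normc_conjc (R : realType) (z : R[i]) : Normc.normc z^* = Normc.normc z.
Proof. by case: z => a b; rewrite /= sqrrN. Qed.

Lemma circle_normc (R : realType) (z : CC R) : circle z -> Normc.normc z = 1.
Proof. by case. Qed.

Lemma circleM (R : realType) (z w : CC R) : circle z -> circle w -> circle (z * w).
Proof. by rewrite /circle /= normrM => -> ->; rewrite mulr1. Qed.

Section Cut.
Local Open Scope complex_scope.
Variable R : realType.

Lemma normc_real (t : R) : Normc.normc t%:C = `|t|.
Proof. by rewrite /= expr0n addr0 sqrtr_sqr. Qed.

Lemma pos_part_real (t : R) : pos_part t%:C = (pos_part t)%:C.
Proof.
have normC : `|t%:C| = `|t|%:C by rewrite -normc_real.
by rewrite /pos_part normC fmorph_div rmorphD rmorph_nat.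
Qed.

Lemma ramp_real (t : R) : ramp t%:C = (ramp t)%:C.
Proof.
rewrite /ramp -(rmorph1 (real_complex R)) -(rmorph_nat (real_complex R) 2).
by rewrite -!rmorphB !pos_part_real rmorphB.
Qed.

Variable d : R.
Hypothesis d_gt0 : 0 < d.

Definition cut (a : R[i]) : R[i] := a * ramp (`|a| / d%:C).

Lemma cutE a : cut a = a * (ramp (Normc.normc a / d))%:C.
Proof. by rewrite /cut (_ : `|a| = (Normc.normc a)%:C) // -fmorph_div ramp_real. Qed.

Lemma normc_sub_cut a :
  Normc.normc (a - cut a) = Normc.normc a * (1 - ramp (Normc.normc a / d)).
Proof.
rewrite cutE -{1}[a]mulr1 -mulrBr -(rmorph1 (real_complex R)) -rmorphB.
have [_ k1] := andP (ramp_itv (Normc.normc a / d)).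
by rewrite Normc.normcM normc_real ger0_norm // subr_ge0.
Qed.

Lemma normc_sub_cut_le a : Normc.normc (a - cut a) <= Normc.normc a.
Proof.
have [k0 _] := andP (ramp_itv (Normc.normc a / d)).
by rewrite normc_sub_cut ler_piMr ?normc_ge0 //; lra.
Qed.

Lemma normc_sub_cut_le2 a : Normc.normc (a - cut a) <= 2 * d.
Proof.
have [ad|ad] := leP (2 * d) (Normc.normc a).
  by rewrite normc_sub_cut ramp_ge2 ?subrr ?mulr0 ?ler_pdivlMr // mulr_ge0 // ltW.
by rewrite (le_trans (normc_sub_cut_le a)) // ltW.
Qed.

Lemma cut_neq0 a : cut a != 0 -> d < Normc.normc a.
Proof.
rewrite ltNge; apply: contra => ad.
by rewrite cutE ramp_le1_eq0 ?mulr0 // ler_pdivrMr // mul1r.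
Qed.

Lemma cut_conjc z a : circle z -> cut (z^* * a) = z^* * cut a.
Proof.
move=> cz; rewrite !cutE Normc.normcM normc_conjc circle_normc // mul1r.
by rewrite mulrA.
Qed.

Lemma continuous_cut : continuous (cut : CC R -> CC R).
Proof.
move=> a; apply: (@continuousM _ _ id (fun a : CC R => ramp (`|a| / d%:C) : CC R)) => //.
apply: (@continuous_comp _ _ _ (fun a : CC R => `|a| / d%:C : CC R)); last first.
  exact: continuous_ramp.
apply: (@continuousM _ _ (fun a : CC R => `|a| : CC R) (fun=> (d%:C)^-1)).
  exact: norm_continuous.
exact: cst_continuous.
Qed.

End Cut.

Section Twist.
Variables (R : realType) (G S : topologicalType).
Variables (OG : groupoid_ops G) (OS : groupoid_ops S).
Variables (pi : S -> G) (iota : CC R -> G -> S).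
Hypotheses (HG : is_groupoid OG) (Htw : is_twist OG OS pi iota).

Lemma twist_surj g : exists s, pi s = g.
Proof. by case: Htw => _ [_ _ + _ _]. Qed.

Lemma twist_unit_iota1 w : g0 OS w -> w = iota 1 (pi w).
Proof.
case: Htw => -[[[_ unitE] _ _ unitl _] _ _ _ _] [_ _ _ _ piax] [_ _ iotaM iota_inj].
move=> [iota_onto _] _ uw.
have [_ _ _ /(_ uw) upw] := piax w.
have [z [cz ezw]] := (iota_onto w).1 upw.
have [zz _] : z * z = z /\ pi w = pi w.
  apply: (iota_inj _ _ _ _ (circleM cz cz) cz upw upw).
  by rewrite iotaM // ezw -{1}(unitE _ uw).2 (unitl w).1.
have z1 : z = 1.
  have z0 : z != 0.
    apply/eqP => z0; move: cz; rewrite /circle /= z0 normr0 => /eqP.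
    by rewrite eq_sym oner_eq0.
  by apply: (mulfI z0); rewrite mulr1.
by rewrite -z1 ezw.
Qed.

Lemma twist_fiber_transitive s s' :
  pi s = pi s' -> exists2 z, circle z & tact OS pi iota z s = s'.
Proof.
move=> ess.
have iota1 := twist_unit_iota1.
case: Htw => -[[[unitS _] _ mulA unitl invS] _ _ _ _] [_ _ _ piM piax] _.
move=> [iota_onto _] _.
have [[unitG _] _ _ _ invG] := HG.
have src_eq : gsrc OS s = gsrc OS s'.
  rewrite (iota1 _ (unitS s).1) (iota1 _ (unitS s').1).
  by have [-> _ _ _] := piax s; have [-> _ _ _] := piax s'; rewrite ess.
have [srcVs rngVs _ Vss] := invS s.
pose a := gmul OS s' (ginv OS s).
have pia : pi a = grng OG (pi s).
  rewrite /a piM; last by rewrite rngVs src_eq.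
  by have [_ _ -> _] := piax s; rewrite -ess; have [_ _ -> _] := invG (pi s).
have [|z [cz eza]] := (iota_onto a).1; first by rewrite pia; exact: (unitG _).2.
exists z => //; rewrite /tact; have [_ -> _ _] := piax s.
rewrite -pia eza /a mulA; [|by rewrite rngVs src_eq|by rewrite srcVs].
by rewrite Vss src_eq (unitl s').2.
Qed.

Lemma absL_section F s :
  is_section OS pi iota F -> absL pi F (pi s) = Normc.normc (F s).
Proof.
move=> secF; rewrite /absL (_ : [set _ | _ in _] = [set Normc.normc (F s)]) ?sup1 //.
apply/seteqP; split=> [_ [s' /= ess' <-]|_ ->]; last by exists s.
have [z cz <-] := twist_fiber_transitive (esym ess').
by rewrite secF //= Normc.normcM normc_conjc circle_normc // mul1r.
Qed.

Definition cutoff (d : R) (F : S -> CC R) : S -> CC R := fun s => cut d (F s).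

Lemma is_section_sub F F' : is_section OS pi iota F -> is_section OS pi iota F' ->
  is_section OS pi iota (fun s => F s - F' s).
Proof. by move=> secF secF' z s cz; rewrite secF // secF' // mulrBr. Qed.

Lemma is_section_cutoff d F :
  is_section OS pi iota F -> is_section OS pi iota (cutoff d F).
Proof. by move=> secF z s cz; rewrite /cutoff secF // cut_conjc. Qed.

Lemma continuous_cutoff d F : continuous F -> continuous (cutoff d F).
Proof.
by move=> cF s; exact: continuous_comp (cF s) (@continuous_cut R d (F s)).
Qed.

Lemma in_suppL_section F s :
  is_section OS pi iota F -> (pi s \in suppL pi F) = (F s != 0).
Proof.
move=> secF; apply/idP/idP => [/set_mem|Fs0]; last apply: mem_set;
  rewrite /suppL /= absL_section //; last by apply: contra Fs0 => /eqP/Normc.eq0_normc ->.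
by apply: contra => /eqP ->; rewrite Normc.normc0.
Qed.

Lemma suppL_cutoff d F : 0 < d -> is_section OS pi iota F ->
  suppL pi (cutoff d F) `<=` [set g | d < absL pi F g].
Proof.
move=> d0 secF g; have [s <-] := twist_surj g.
rewrite /suppL /= !absL_section //; last exact: is_section_cutoff.
move=> cutF0; apply: cut_neq0 => //; apply: contra cutF0.
by rewrite /cutoff => /eqP ->; rewrite Normc.normc0.
Qed.

Lemma absL_gt_suppL F F' (e : R) : 0 < e ->
  is_section OS pi iota F -> is_section OS pi iota F' ->
  (norm2 OG pi (fun s => (F s - F' s)%R) < e%:E)%E ->
  [set g | e < absL pi F g] `<=` suppL pi F'.
Proof.
move=> e0 secF secF' FF'e g; have [s <-] := twist_surj g.
have := norm2_lt_absL (pi s) HG FF'e.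
rewrite /suppL /= !absL_section //; last exact: is_section_sub.
move=> FF's eFs; apply/eqP => /Normc.eq0_normc F's0.
by move: FF's; rewrite F's0 subr0 ler_sqr ?nnegrE ?normc_ge0 ?(ltW e0) // leNgt eFs.
Qed.

Lemma cutoff_in_CcU U d f : 0 < d ->
  in_l2 OG OS pi iota f -> suppL pi f `<=` U -> in_CcU OS pi iota U (cutoff d f).
Proof.
move=> d0 [cf secf fCc] fU; have [g [_ secg cg] fg] := fCc d d0.
have supp_sub : suppL pi (cutoff d f) `<=` suppL pi g `&` suppL pi f.
  move=> x /(suppL_cutoff d0 secf) dfx; split.
    exact: (absL_gt_suppL d0 secf secg fg dfx).
  by rewrite /suppL /= gt_eqF // (lt_trans d0).
split; [split|].
- exact: continuous_cutoff.
- exact: is_section_cutoff.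
- apply: (subclosed_compact _ cg); first exact: closed_closure.
  by apply: closureS => x /supp_sub[].
- by move=> x /supp_sub[_ /fU].
Qed.

Lemma absL_sub_cutoff_le d f g x : 0 < d ->
  is_section OS pi iota f -> is_section OS pi iota g ->
  absL pi (fun s => f s - cutoff d f s) x ^+ 2 <=
  absL pi (fun s => f s - g s) x ^+ 2 + 4 * d ^+ 2 * \1_(suppL pi g) x.
Proof.
move=> d0 secf secg; have [s <-] := twist_surj x.
have secfc := is_section_sub secf (is_section_cutoff d secf).
rewrite !absL_section //; last exact: is_section_sub.
rewrite indicE in_suppL_section //.
have [gs0|gs0] := eqVneq (g s) 0.
  rewrite gs0 mulr0 addr0 subr0.
  by rewrite ler_sqr ?nnegrE ?normc_ge0 // normc_sub_cut_le.
have := normc_sub_cut_le2 d0 (f s); have := normc_ge0 (f s - cutoff d f s).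
have := sqr_ge0 (Normc.normc (f s - g s)); rewrite mulr1 /cutoff; nra.
Qed.

Lemma norm2_sub_cutoff_le f g (d r t : R) (N : nat) : 0 < d -> 0 <= t ->
  is_section OS pi iota f -> is_section OS pi iota g ->
  (forall B (c : R), unit_fibers OG B -> 0 <= c ->
     (\esum_(x in B) (c * \1_(suppL pi g) x)%:E <= (c * N%:R)%:E)%E) ->
  (norm2 OG pi (fun s => (f s - g s)%R) < r%:E)%E ->
  r ^+ 2 + 4 * d ^+ 2 * N%:R <= t ^+ 2 ->
  (norm2 OG pi (fun s => (f s - cutoff d f s)%R) <= t%:E)%E.
Proof.
move=> d0 t0 secf secg gN fg rdt; apply: norm2_le_fibers => // B fibB.
apply: (@le_trans _ _ (\esum_(x in B) ((absL pi (fun s => f s - g s) x ^+ 2)%:E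
    + (4 * d ^+ 2 * \1_(suppL pi g) x)%:E)%E)).
  by apply: le_esum => x _; rewrite -EFinD lee_fin absL_sub_cutoff_le.
have c0 : 0 <= 4 * d ^+ 2 by rewrite mulr_ge0 ?sqr_ge0.
rewrite esumD => [||x _]; last by rewrite lee_fin mulr_ge0.
- apply: le_trans (leeD (norm2_lt_fiber fg fibB) (gN B _ fibB c0)) _.
  by rewrite -EFinD lee_fin.
- by move=> x _; rewrite lee_fin sqr_ge0.
Qed.

End Twist.

Theorem proposition3p3 (R : realType) (G S : topologicalType)
  (OG : groupoid_ops G) (OS : groupoid_ops S)
  (pi : S -> G) (iota : CC R -> G -> S) :
  is_topological_groupoid OG -> is_etale OG -> lc_hausdorff G ->
  is_twist OG OS pi iota ->
  forall (f : S -> CC R) (U : set G),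
    open U ->
    in_l2 OG OS pi iota f ->
    suppL pi f `<=` U ->
    in_norm2_closure OG pi (in_CcU OS pi iota U) f.
Proof.
move=> HOG Het _ Htw f U _ fl2 fU e e0.
have HG : is_groupoid OG by case: HOG.
have [_ secf fCc] := fl2.
have e4 : 0 < e / 4 by lra.
have [g [_ secg cg] fg] := fCc (e / 4) e4.
have [N gN] := etale_fiber_indicator_bound R HOG Het cg.
pose d := e / (8 * (N%:R + 1)).
have N1 : 0 < 8 * (N%:R + 1) :> R by rewrite mulr_gt0 // ltr_wpDl.
have d0 : 0 < d by rewrite divr_gt0.
have small_d : (e / 4) ^+ 2 + 4 * d ^+ 2 * N%:R <= (e / 2) ^+ 2.
  have N0 : 0 <= N%:R :> R by [].
  have : d * (8 * (N%:R + 1)) = e by rewrite /d divfK // gt_eqF.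
  nra.
exists (cutoff d f); first exact: (cutoff_in_CcU HG Htw d0 fl2 fU).
apply: (le_lt_trans (norm2_sub_cutoff_le HG Htw d0 _ secf secg gN fg small_d)).
- lra.
- rewrite lte_fin; lra.
Qed.
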